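(* Let $P$ be a grid polygon and let $\pi$ be a shortest path in $P$ between two cells of $P$. Then its length satisfies $|\pi|\le \frac12 E(P)-2$.
   Context: The plane is tiled by unit square cells indexed by $(x,y)\in\mathbb{Z}^2$; two cells are adjacent if they share an edge. A grid polygon $P$ is a finite nonempty set of cells connected under adjacency (it may contain holes, i.e. bounded regions of cells not in $P$). $E(P)$ is the number of unit edges shared by a cell of $P$ and a cell not in $P$. A path in $P$ is a sequence of cells of $P$ in which consecutive cells are adjacent; its length is the number of steps, i.e. the number of cells minus one. *)

From mathcomp Require Import all_boot all_order all_algebra.
Set Implicit Arguments. Unset Strict Implicit. Unset Printing Implicit Defensive.
Import GRing.Theory Num.Theory.

Definition cell := (int * int)%type.

Definition adj (c d : cell) : bool :=
  (absz (c.1 - d.1)%R + absz (c.2 - d.2)%R == 1)%N.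

Definition neighbors (c : cell) : seq cell :=
  [:: ((c.1 + 1)%R, c.2); ((c.1 - 1)%R, c.2);
      (c.1, (c.2 + 1)%R); (c.1, (c.2 - 1)%R)].

(* A finite set of cells is represented by a sequence (membership = \in;
   duplicates are irrelevant). *)

Definition E (P : seq cell) : nat :=
  \sum_(c <- undup P) count (fun d => d \notin P) (neighbors c).

(* s is (the tail of) a path in P from x to y: the path is x :: s,
   every cell lies in P, consecutive cells are adjacent, and it ends at y.
   Its length (number of steps) is size s. *)
Definition is_path_in (P : seq cell) (x y : cell) (s : seq cell) : bool :=
  [&& all (fun c => c \in P) (x :: s), path adj x s & last x s == y].

Definition connected (P : seq cell) : Prop :=
  forall x y, x \in P -> y \in P -> exists s, is_path_in P x y s.

Definition grid_polygon (P : seq cell) : Prop := P != [::] /\ connected P.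

Definition shortest_path (P : seq cell) (x y : cell) (s : seq cell) : Prop :=
  is_path_in P x y s /\
  forall t, is_path_in P x y t -> (size s <= size t)%N.

(** For each of the four unit directions [w], slide every cell of a shortest
    path [x = c_0, ..., c_n = y] in direction [w] until it is about to leave
    [P]; the cell reached has its [w]-neighbour outside [P], so it accounts
    for one boundary edge facing [w].  Two cells [c_i, c_j] of the path that
    slide to the same cell lie on a common segment of [P] parallel to [w], so
    by minimality the subpath between them has no step orthogonal to [w].
    Hence sliding the start of the path and the start of every orthogonal step
    gives distinct exposed cells: at least [1 + #(steps orthogonal to w)]
    boundary edges face [w].  Summing over the four directions, every step is
    counted twice, so [E(P) >= 2 |pi| + 4]. *)

From mathcomp Require Import all_boot all_order all_algebra.
From mathcomp Require Import zify ring lra.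
Import GRing.Theory Num.Theory.
Local Open Scope ring_scope.

Definition east : cell := (1, 0).
Definition north : cell := (0, 1).

Definition opp_dir (w : cell) : cell := (- w.1, - w.2).

Definition dirs : seq cell := [:: east; opp_dir east; north; opp_dir north].

Definition translate (w c : cell) : cell := (c.1 + w.1, c.2 + w.2).

Definition ray (c w : cell) (k : nat) : cell := (c.1 + k%:Z * w.1, c.2 + k%:Z * w.2).

Definition proj (w c : cell) : int := c.1 * w.1 + c.2 * w.2.

Lemma dirsP w : w \in dirs ->
  [\/ w = (1, 0), w = (-1, 0), w = (0, 1) | w = (0, -1)].
Proof. by rewrite !inE => /or4P [] /eqP ->; constructor. Qed.

Lemma opp_dir_dirs {w} : w \in dirs -> opp_dir w \in dirs.
Proof. by case/dirsP=> ->. Qed.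

Lemma adj_translate c w : w \in dirs -> adj c (translate w c).
Proof. by case: c => c1 c2; case/dirsP=> -> /=; apply/eqP => /=; lia. Qed.

Lemma neighborsE c : neighbors c = [seq translate w c | w <- dirs].
Proof. by rewrite /neighbors /translate /= !addr0. Qed.

Lemma ray0 c w : ray c w 0 = c.
Proof. by case: c => c1 c2; rewrite /ray !mul0r !addr0. Qed.

Lemma rayS c w k : ray c w k.+1 = translate w (ray c w k).
Proof. rewrite /ray /translate /=; congr (_, _); rewrite -addn1 PoszD; ring. Qed.

Lemma ray_inj c w : w \in dirs -> injective (ray c w).
Proof. by move=> wd i j; rewrite /ray; case/dirsP: wd => -> /= [h1 h2]; lia. Qed.

Lemma ray_opp_dir z w m j : w \in dirs -> (j <= m)%N ->
  ray (ray z w m) (opp_dir w) j = ray z w (m - j)%N.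
Proof.
by case: z => z1 z2; rewrite /ray /opp_dir; case/dirsP=> -> /= ?; congr (_, _); lia.
Qed.

Lemma ray_shift {c e w a b} : w \in dirs -> ray c w a = ray e w b -> (a <= b)%N ->
  c = ray e w (b - a)%N.
Proof.
case: c e => c1 c2 [e1 e2]; rewrite /ray.
by case/dirsP=> -> /= [h1 h2] ?; congr (_, _); lia.
Qed.

Lemma proj_ray w z k : w \in dirs -> proj w (ray z w k) = proj w z + k%:Z.
Proof. by rewrite /proj /ray; case/dirsP=> -> /=; ring. Qed.

Fixpoint orth_steps (w c : cell) (p : seq cell) : nat :=
  if p is d :: p' then ((proj w d == proj w c) + orth_steps w d p')%N else 0%N.

Lemma orth_steps_opp_dir w c p : orth_steps (opp_dir w) c p = orth_steps w c p.
Proof.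
elim: p c => [|d p IH] c //=; rewrite IH /proj /opp_dir /=.
by rewrite !mulrN -!opprD eqr_opp.
Qed.

Lemma orth_steps_axes {c p} : path adj c p ->
  (orth_steps east c p + orth_steps north c p = size p)%N.
Proof.
elim: p c => [|d p IH] c //= /andP [/eqP cd /IH {}IH].
move: cd IH; set a := orth_steps east d p; set b := orth_steps north d p.
by rewrite /proj /=; case: eqP; case: eqP => /=; lia.
Qed.

Lemma proj_adj {w c d} : w \in dirs -> adj c d ->
  (absz (proj w d - proj w c) + (proj w d == proj w c) = 1)%N.
Proof.
case: c d => c1 c2 [d1 d2]; rewrite /adj /proj => + /eqP /=.
by case/dirsP=> -> /=; case: eqP => /=; lia.
Qed.

Lemma proj_path {w c p} : w \in dirs -> path adj c p ->
  (absz (proj w (last c p) - proj w c) + orth_steps w c p <= size p)%N.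
Proof.
move=> wd; elim: p c => [|d p IH] c /=; first by rewrite subrr.
by case/andP=> /(proj_adj wd) cd /IH; lia.
Qed.

Section Polygon.

Variable P : seq cell.

Lemma path_along_ray z w m : w \in dirs ->
  (forall j, (j <= m)%N -> ray z w j \in P) ->
  exists2 t, is_path_in P z (ray z w m) t & size t = m.
Proof.
move=> wd; elim: m => [|m IH] inP.
  exists [::] => //; rewrite /is_path_in /= ray0 eqxx andbT.
  by have := inP 0%N isT; rewrite ray0 => ->.
have [|t /and3P [tP tpath /eqP tlast] tsize] := IH.
  by move=> j ?; apply: inP; apply: leqW.
exists (rcons t (ray z w m.+1)); last by rewrite size_rcons tsize.
apply/and3P; split; last by rewrite last_rcons.
- by rewrite -rcons_cons all_rcons tP andbT inP.
- by rewrite rcons_path tpath tlast rayS adj_translate.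
Qed.

Lemma path_along_ray_rev z w m : w \in dirs ->
  (forall j, (j <= m)%N -> ray z w j \in P) ->
  exists2 t, is_path_in P (ray z w m) z t & size t = m.
Proof.
move=> wd inP.
have [j jm|t] := path_along_ray (ray z w m) (opp_dir w) m (opp_dir_dirs wd).
  by rewrite ray_opp_dir // inP // leq_subr.
by rewrite ray_opp_dir // subnn ray0; exists t.
Qed.

(** The smallest [k < size P] with [c + (k+1) w] outside [P], or [size P]
    if there is none; the latter cannot happen when [c \in P] and
    [w \in dirs], as [P] cannot contain the [size P + 1] distinct cells
    [c, c + w, ..., c + (size P) w]. *)
Definition exit_dist (w c : cell) : nat :=
  find (fun k => ray c w k.+1 \notin P) (iota 0 (size P)).

Definition exit_cell (w c : cell) : cell := ray c w (exit_dist w c).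

Lemma exit_distP {w c} : w \in dirs -> c \in P ->
  (forall j, (j <= exit_dist w c)%N -> ray c w j \in P) /\
  ray c w (exit_dist w c).+1 \notin P.
Proof.
move=> wd cP; set k := exit_dist w c.
have k_le : (k <= size P)%N by rewrite -[X in (_ <= X)%N](size_iota 0) find_size.
have inP j : (j <= k)%N -> ray c w j \in P.
  case: j => [_|j jk]; first by rewrite ray0.
  have := before_find 0%N jk.
  by rewrite nth_iota ?add0n => [/negbFE|]; last exact: leq_trans jk k_le.
split=> //; have [k_lt|] := ltnP k (size P).
  have := @nth_find _ 0%N (fun k => ray c w k.+1 \notin P) (iota 0 (size P)).
  by rewrite has_find size_iota nth_iota ?add0n //; apply.
move=> k_ge; have k_size : k = size P by apply/eqP; rewrite eqn_leq k_le.
set cells := [seq ray c w j | j <- iota 0 (size P).+1].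
have uniq_cells : uniq cells by rewrite map_inj_uniq ?iota_uniq //; apply: ray_inj.
suff /(uniq_leq_size uniq_cells) : {subset cells <= P}.
  by rewrite size_map size_iota ltnn.
move=> b /mapP [j]; rewrite mem_iota ltnS => /andP [_ jk] ->.
by apply: inP; rewrite k_size.
Qed.

Definition exposed (w : cell) : seq cell := [seq c <- undup P | translate w c \notin P].

Lemma exit_cell_exposed w c : w \in dirs -> c \in P -> exit_cell w c \in exposed w.
Proof.
move=> wd cP; have [inP out] := exit_distP wd cP.
by rewrite mem_filter /exit_cell -rayS out mem_undup inP.
Qed.

Lemma E_exposed : E P = (\sum_(w <- dirs) size (exposed w))%N.
Proof.
rewrite /E; under eq_bigr => c _ do rewrite neighborsE count_map -sum1_count big_mkcond.
rewrite exchange_big; apply: eq_bigr => w _.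
by rewrite size_filter -sum1_count [RHS]big_mkcond.
Qed.

Lemma shortest_path_behead {c d y s} :
  shortest_path P c y (d :: s) -> shortest_path P d y s.
Proof.
case=> /and3P [/= /andP [cP sP] /andP [cd spath] slast] smin.
split=> [|t /and3P [tP tpath tlast]]; first exact/and3P.
have := smin (d :: t); rewrite ltnS; apply.
by apply/and3P; split=> //; apply/andP.
Qed.

Lemma shortest_path_take {c y s} i :
  shortest_path P c y s -> shortest_path P c (last c (take i s)) (take i s).
Proof.
rewrite -{1}(cat_take_drop i s) => -[/and3P [sP spath slast] smin].
move: sP spath slast; rewrite -cat_cons all_cat cat_path last_cat.
move=> /andP [tP dP] /andP [tpath dpath] dlast.
split=> [|t /and3P [t'P t'path /eqP t'last]].
  by rewrite /is_path_in tP tpath eqxx.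
have := smin (t ++ drop i s); rewrite !size_cat leq_add2r; apply.
by rewrite /is_path_in -cat_cons all_cat t'P dP cat_path t'path last_cat t'last dpath.
Qed.

(** Both endpoints lie on the segment of [P] ending at their common exit
    cell, so a path of length [|proj w e - proj w c|] joins them, while any
    path needs that many steps parallel to [w] besides its orthogonal ones. *)
Lemma orth_steps_same_exit {w c p} : w \in dirs ->
  shortest_path P c (last c p) p -> exit_cell w c = exit_cell w (last c p) ->
  orth_steps w c p = 0%N.
Proof.
move=> wd [/and3P [pP ppath _] pmin]; set e := last c p => same_exit.
have cP : c \in P by case/andP: pP.
have eP : e \in P by move/allP: pP; apply; apply: mem_last.
have [cray _] := exit_distP wd cP; have [eray _] := exit_distP wd eP.
move: same_exit cray eray; rewrite /exit_cell.
set a := exit_dist w c; set b := exit_dist w e => same_exit cray eray.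
have proj_ce : proj w c + a%:Z = proj w e + b%:Z by rewrite -!proj_ray ?same_exit.
have [t t_path t_size] : exists2 t, is_path_in P c e t & size t = absz (a%:Z - b%:Z).
  have [ab|/ltnW ba] := leqP a b.
    rewrite (ray_shift wd same_exit ab).
    have [j jb|t ? t_size] := path_along_ray_rev e w (b - a)%N wd.
      by apply: eray; apply: leq_trans jb (leq_subr _ _).
    by exists t => //; rewrite t_size; lia.
  rewrite (ray_shift wd (esym same_exit) ba).
  have [j jb|t ? t_size] := path_along_ray c w (a - b)%N wd.
    by apply: cray; apply: leq_trans jb (leq_subr _ _).
  by exists t => //; rewrite t_size; lia.
have := pmin t t_path; have := proj_path wd ppath; rewrite -/e; lia.
Qed.

Fixpoint exit_cells (w c : cell) (s : seq cell) : seq cell :=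
  if s is d :: s' then
    if proj w d == proj w c then exit_cell w c :: exit_cells w d s'
    else exit_cells w d s'
  else [:: exit_cell w c].

Lemma size_exit_cells w c s : size (exit_cells w c s) = (orth_steps w c s).+1.
Proof. by elim: s c => [|d s IH] c //=; case: eqP => _ /=; rewrite IH. Qed.

Lemma exit_cellsP w c s b : b \in exit_cells w c s ->
  exists i, b = exit_cell w (last c (take i s)).
Proof.
elim: s c => [|d s IH] c /=; first by rewrite inE => /eqP ->; exists 0%N.
have from_tail : b \in exit_cells w d s ->
    exists i, b = exit_cell w (last c (take i (d :: s))).
  by case/IH=> i ->; exists i.+1.
case: ifP => _ //; rewrite inE => /orP [/eqP ->|]; last exact: from_tail.
by exists 0%N.
Qed.

Lemma uniq_exit_cells {w c s y} : w \in dirs -> shortest_path P c y s ->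
  uniq (exit_cells w c s).
Proof.
move=> wd; elim: s c => [|d s IH] c sp //=.
have sp_tail := shortest_path_behead sp.
case: ifP => orth; last exact: IH sp_tail.
rewrite /= (IH _ sp_tail) andbT; apply/negP => /exit_cellsP [i same_exit].
have := orth_steps_same_exit wd (shortest_path_take i.+1 sp).
by rewrite /= orth same_exit; move/(_ erefl).
Qed.

Lemma exit_cells_exposed {w x y s} : w \in dirs -> shortest_path P x y s ->
  {subset exit_cells w x s <= exposed w}.
Proof.
move=> wd [/and3P [sP _ _] _] _ /exit_cellsP [i ->].
apply: exit_cell_exposed wd _; move/allP: sP; apply.
have := mem_last x (take i s); rewrite inE => /orP [/eqP ->|/mem_take].
  exact: mem_head.
by rewrite inE => ->; rewrite orbT.
Qed.

Lemma orth_steps_exposed w {x y s} : w \in dirs -> shortest_path P x y s ->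
  ((orth_steps w x s).+1 <= size (exposed w))%N.
Proof.
move=> wd sp; rewrite -size_exit_cells.
exact: uniq_leq_size (uniq_exit_cells wd sp) (exit_cells_exposed wd sp).
Qed.

Lemma shortest_path_size_le_E x y s :
  shortest_path P x y s -> (2 * size s + 4 <= E P)%N.
Proof.
move=> sp; have [/and3P [_ spath _] _] := sp.
rewrite E_exposed /dirs !big_cons big_nil -(orth_steps_axes spath).
have := orth_steps_exposed east isT sp; have := orth_steps_exposed north isT sp.
have := orth_steps_exposed (opp_dir east) isT sp.
have := orth_steps_exposed (opp_dir north) isT sp.
rewrite !orth_steps_opp_dir; lia.
Qed.

End Polygon.

Theorem lemma4 (P : seq cell) (x y : cell) (s : seq cell) :
  grid_polygon P -> shortest_path P x y s ->
  ((size s)%:R <= (E P)%:R / 2 - 2 :> rat)%R.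
Proof.
move=> _ /shortest_path_size_le_E; rewrite -(ler_nat rat) natrD natrM; lra.
Qed.
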